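(* Let $m\ge1$ and $\alpha,\beta^1,\dots,\beta^m\in\mathrm{ord}$. If $\alpha<\beta^1,\dots,\beta^m$, then $\alpha\le\beta^1,\dots,\beta^m$.
   Context: Work constructively. Let $\mathfrak F$ be a set of index sets containing $\mathbb N$ and each $\mathbb N_k=\{n\in\mathbb N:n<k\}$ ($k\ge0$), closed (up to isomorphism) under finitely enumerated subsets, sets of finitely enumerated subsets, and disjoint unions indexed by elements of $\mathfrak F$. A finitely enumerated subset of $A$ is one given by a map $\mathbb N_k\to A$; write $F\subseteq_f I$. The set $\mathrm{ord}$ is inductively generated by $\underline 0$ and, for every family $(\alpha_i)_{i\in I}$ with $I\in\mathfrak F$, $\alpha_i\in\mathrm{ord}$, an element $\mathrm S(\alpha_i)_{i\in I}$; for such $\alpha$, $I_\alpha=I$ and $\alpha_i$ are its definitional subordinals; $I_{\underline 0}=\emptyset$. For a finite list $F$ in $I_\alpha$, $\alpha_F$ is the list of the $\alpha_i$, $i\in F$. Relations between an element and a nonempty finite list, by simultaneous induction: $\alpha\le\beta^1,\dots,\beta^m$ means $\alpha_i<\beta^1,\dots,\beta^m$ for all $i\in I_\alpha$; $\alpha<\beta^1,\dots,\beta^m$ means there exist $F_1\subseteq_f I_{\beta^1},\dots,F_m\subseteq_f I_{\beta^m}$, not all empty, with $\alpha\le\beta^1_{F_1},\dots,\beta^m_{F_m}$ (concatenated list). *)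

From mathcomp Require Import all_boot.
Set Implicit Arguments. Unset Strict Implicit. Unset Printing Implicit Defensive.

Definition iso (A B : Type) : Prop :=
  exists (f : A -> B) (g : B -> A), cancel f g /\ cancel g f.

(* A finitely enumerated subset of A: a map N_k -> A, i.e. k and 'I_k -> A. *)
Definition fin_enum (A : Type) : Type := {k : nat & 'I_k -> A}.

Definition enum_image (A : Type) (k : nat) (e : 'I_k -> A) : Type :=
  {a : A | exists j, e j = a}.

(* A set F of index sets, given as a universe of codes U with decoding El,
   containing N and each N_k, closed (up to isomorphism) under finitely
   enumerated subsets, sets of finitely enumerated subsets, and disjoint
   unions indexed by elements of F. *)
Record IndexSets : Type := {
  U :> Type;
  El : U -> Type;
  has_nat : exists u, iso (El u) nat;
  has_Nk : forall k : nat, exists u, iso (El u) 'I_k;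
  closed_subset : forall u (k : nat) (e : 'I_k -> El u),
      exists v, iso (El v) (enum_image e);
  closed_finsubsets : forall u, exists v, iso (El v) (fin_enum (El u));
  closed_sigma : forall u (g : El u -> U),
      exists v, iso (El v) {i : El u & El (g i)}
}.

Section Ord.
Variable F : IndexSets.

Inductive ord : Type :=
| ozero : ord
| osucc : forall u : U F, (El u -> ord) -> ord.

Definition Ix (a : ord) : Type :=
  match a with ozero => Empty_set | @osucc u _ => El u end.

Definition sub (a : ord) : Ix a -> ord :=
  match a as a0 return Ix a0 -> ord with
  | ozero => fun e => match e with end
  | @osucc u f => f
  end.

(* A choice of finite lists F_j in I_{beta^j}, paired with the beta^j. *)
Definition choice := seq {b : ord & seq (Ix b)}.

Definition choice_list (Fs : choice) : seq ord :=
  flatten (map (fun p => map (@sub (projT1 p)) (projT2 p)) Fs).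

Inductive ole : ord -> seq ord -> Prop :=
| ole_intro : forall a bs,
    (forall i : Ix a, olt (sub i) bs) -> ole a bs
with olt : ord -> seq ord -> Prop :=
| olt_intro : forall a bs (Fs : choice),
    map (@projT1 _ _) Fs = bs ->
    (exists2 p, p \in map (fun p => size (projT2 p)) Fs & p != 0) ->
    ole a (choice_list Fs) -> olt a bs.

End Ord.

From mathcomp Require Import all_boot.

(* If alpha < bs is witnessed by the lists F_j, i.e.
   alpha <= bs_F, then every alpha_i < bs_F, which the induction hypothesis
   weakens to alpha_i <= bs_F; so the same F_j witness alpha_i < bs. *)

Section OrdRelations.
Variable F : IndexSets.
Implicit Types (a : ord F) (bs : seq (ord F)).

Lemma oleP a bs : ole a bs <-> forall i : Ix a, olt (sub i) bs.
Proof. by split=> [[]|/ole_intro]. Qed.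

Lemma oltP a bs :
  olt a bs <->
  exists Fs : choice F, [/\ map (@projT1 _ _) Fs = bs,
    exists2 p, p \in map (fun p => size (projT2 p)) Fs & p != 0
    & ole a (choice_list Fs)].
Proof.
split=> [[{}a {}bs Fs defbs nzFs leFs] | [Fs [defbs nzFs leFs]]].
  by exists Fs.
exact: olt_intro defbs nzFs leFs.
Qed.

Lemma olt_ole a bs : olt a bs -> ole a bs.
Proof.
elim: a bs => [|u f IH] bs; first by move=> _; apply/oleP => -[].
case/oltP=> Fs [defbs nzFs leFs]; apply/oleP=> i.
apply/oltP; exists Fs; split=> //.
by apply: IH; move/oleP: leFs; apply.
Qed.

End OrdRelations.

Theorem lemma4p3 (F : IndexSets) (a : ord F) (bs : seq (ord F)) :
  0 < size bs -> olt a bs -> ole a bs.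
Proof. by move=> _; apply: olt_ole. Qed.
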